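(* Let $m,n$ be positive integers with $m>n$ and $m\ge 3$, and let $q$ be an odd prime. Let $(X,y_1,y_2)$ be positive integers with $X>1$, $\gcd(X,q)=1$, $y_1>y_2$, satisfying \[ X^m-X^n=q^{y_1}-q^{y_2}. \] Put $E=e_q(X)$ (then $E$ divides $m-n$), $N=(m-n)/E$, $e=\nu_q(N)$, and assume that $N$ is odd and $y_2>e$. Define polynomials in $\mathbb Z[t]$: \[ A_E(t)=\begin{cases} t-1 & E=1,\\ t^{E-1}+t^{E-2}+\cdots+t+1 & E>1,\end{cases}\qquad B_{n,E}(t)=\begin{cases} t^n & E=1,\\ t^n(t-1) & E>1,\end{cases} \] \[ I_{E,N}(t)=t^{E(N-1)}+t^{E(N-2)}+\cdots+t^E+1. \] If $E>1$, assume at least one of: (I) $A_E(X)\ne q^{y_2-e}$; (II) $\dfrac{(y_2-e)(m-2E+2)+E-1}{m+\delta(E-1)}\ge \dfrac{\log 2}{\log q}$, where $\delta=1$ if $X^m>q^{y_1}$ and $\delta=0$ if $X^m<q^{y_1}$. Let $(P,Q)$ be the (unique) pair of polynomials in $\mathbb Q[t]$ with $\deg Q<\deg A_E$ such that \[ A_E(t)P(t)+B_{n,E}(t)\,I_{E,N}(t)\,Q(t)=1 \] in $\mathbb Q[t]$, and let $l$ be the least positive integer with $lP\in\mathbb Z[t]$ and $lQ\in\mathbb Z[t]$. Then \[ q^{y_2}\,l\,Q(X)+l\,A_E(X)\equiv 0 \pmod{q^{\kappa}}, \] where \[ \kappa=\begin{cases}\min\left\{2(y_2-e),\ \left\lceil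 \frac{m}{E-1}(y_2-e)\right\rceil\right\} & \text{if } E>1 \text{ and (I) holds},\\ 2(y_2-e) & \text{if } E=1, \text{ or } E>1 \text{ and (II) holds}.\end{cases} \]
   Context: For a positive integer $M$ and an integer $A$ coprime to $M$, $e_M(A)$ denotes the least positive integer $e$ such that $A^e\equiv 1$ or $A^e\equiv -1\pmod M$. For a prime $p$ and nonzero integer $A$, $\nu_p(A)$ is the exponent of $p$ in $A$. *)

From Stdlib Require Import ZArith Reals.
From mathcomp Require Import all_boot all_order all_algebra.
Set Implicit Arguments. Unset Strict Implicit. Unset Printing Implicit Defensive.
Import Order.TTheory GRing.Theory Num.Theory.

(* is_e_order M A E : E = e_M(A), the least positive integer E with
   A^E = 1 or A^E = -1 (mod M). *)
Definition pm1_mod (M A k : nat) : bool :=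
  (A ^ k == 1 %[mod M]) || (M %| A ^ k + 1).
Definition is_e_order (M A E : nat) : Prop :=
  0 < E /\ pm1_mod M A E /\ (forall k, 0 < k -> k < E -> ~~ pm1_mod M A k).

Local Open Scope ring_scope.

Definition polyA (R : nzRingType) (E : nat) : {poly R} :=
  if E == 1%N then 'X - 1 else \sum_(i < E) 'X^i.
Definition polyB (R : nzRingType) (n E : nat) : {poly R} :=
  if E == 1%N then 'X^n else 'X^n * ('X - 1).
Definition polyI (R : nzRingType) (E N : nat) : {poly R} :=
  \sum_(i < N) 'X^(E * i).

Definition int_poly (p : {poly rat}) : Prop :=
  forall i : nat, exists z : int, p`_i = z%:~R.

Local Close Scope ring_scope.
Definition condII (X q m y1 y2 e E : nat) : Prop :=
  let delta : nat := if (q ^ y1 < X ^ m)%N then 1%N else 0%N in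
  let num : Z := Z.sub (Z.add (Z.mul (Z.of_nat (y2 - e))
                     (Z.add (Z.sub (Z.of_nat m) (Z.mul 2 (Z.of_nat E))) 2))
                     (Z.of_nat E)) 1 in
  let den : nat := (m + delta * (E - 1))%N in
  Rge (Rdiv (IZR num) (INR den)) (Rdiv (ln (INR 2)) (ln (INR q))).

From Stdlib Require Import ZArith Reals Lra Lia.
From mathcomp Require Import all_boot all_order all_algebra zify ring.
Set Implicit Arguments. Unset Strict Implicit. Unset Printing Implicit Defensive.
Import Order.TTheory GRing.Theory Num.Theory.

(* Since q ^ y2 divides X ^ n * (X ^ (m - n) - 1) and X is prime to q, X ^ (m - n) = 1
   (mod q); as N = (m - n) / E is odd, this forces E | m - n and X ^ E = 1 (mod q).
   Lifting the exponent, (X ^ (m - n) - 1) / (X ^ E - 1) = \sum_(i < N) X ^ (E i) has q-adic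
   valuation nu_q(N) = e, so q ^ (y2 - e) divides X ^ E - 1 and hence A = A_E(X).
   Evaluating the Bezout identity at X, where B I A = X ^ m - X ^ n = q ^ y1 - q ^ y2, gives
     q ^ y2 l Q(X) + l A = A ^ 2 (l P(X)) + q ^ y1 (l Q(X)),
   a multiple of q ^ min(2 (y2 - e), y1).  It remains to see kappa <= y1: either
   2 (y2 - e) < y1, or X ^ m <= q ^ y1 and the size bound q ^ (y2 - e) <= A < 2 X ^ (E - 1),
   sharpened by (I) or combined with (II), gives it. *)

Lemma expn1D_lin (q t i : nat) :
  exists r, (1 + q * t) ^ i = 1 + i * (q * t) + q ^ 2 * r.
Proof.
elim: i => [|i [r IH]]; first by exists 0; rewrite expn0; lia.
by exists (r + i * t * t + q * t * r); rewrite expnS IH; nia.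
Qed.

Lemma sum_expn_mod (q Y N : nat) :
  Y = 1 %[mod q] -> \sum_(i < N) Y ^ i = N %[mod q].
Proof.
move=> Y1; elim: N => [|N IH]; first by rewrite big_ord0.
by rewrite big_ord_recr /= -modnDm IH -modnXm Y1 modnXm exp1n modnDm addn1.
Qed.

Lemma logn_sum_expn_prime (q Y : nat) : prime q -> odd q -> Y = 1 %[mod q] ->
  logn q (\sum_(i < q) Y ^ i) = 1.
Proof.
move=> pq oq Y1; have q1 := prime_gt1 pq.
have [t ->] : exists t, Y = 1 + q * t.
  by exists (Y %/ q); rewrite {1}(divn_eq Y q) Y1 modn_small // addnC mulnC.
have [h qh] : exists h, q = h.*2.+1 by exists q./2; rewrite -[LHS]odd_double_half oq.
have sum2E N : exists r, 2 * (\sum_(i < N) (1 + q * t) ^ i) + N * (q * t)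
                         = 2 * N + N * N * (q * t) + 2 * (q ^ 2 * r).
  elim: N => [|N [r IH]]; first by exists 0; rewrite big_ord0; lia.
  have [r' Hr'] := expn1D_lin q t N.
  exists (r + r'); rewrite big_ord_recr /= Hr'.
  by move: IH; set S := \sum_(_ < _) _; nia.
(* With q = 2h + 1 the linear terms add up to q * (q * h) * t, a multiple of q ^ 2. *)
have [r sumE] : exists r, \sum_(i < q) (1 + q * t) ^ i = q * (1 + q * r).
  have [r Hr] := sum2E q; exists (t * h + r); move: Hr.
  by set S := \sum_(_ < _) _; rewrite qh -!muln2; nia.
rewrite sumE (lognM _ (prime_gt0 pq)) // (logn_prime _ pq) eqxx logn_coprime //.
by rewrite prime_coprime // (dvdn_addl _ (dvdn_mulr _ (dvdnn q))) dvdn1 gtn_eqF.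
Qed.

Lemma sum_expn_gt0 (Y N : nat) : 0 < N -> 0 < \sum_(i < N) Y ^ i.
Proof. by case: N => // N _; rewrite big_ord_recl expn0. Qed.

Lemma sum_expn_mul (Y a b : nat) :
  \sum_(i < a * b) Y ^ i = (\sum_(i < a) Y ^ i) * \sum_(j < b) (Y ^ a) ^ j.
Proof.
elim: b => [|b IH]; first by rewrite muln0 !big_ord0 muln0.
rewrite mulnS big_split_ord /= big_ord_recl /= expn0 mulnDr muln1; congr (_ + _).
rewrite (eq_bigr (fun i : 'I_(a * b) => Y ^ a * Y ^ i)); last by move=> i _; rewrite expnD.
rewrite -big_distrr /= IH mulnCA; congr (_ * _).
by rewrite big_distrr /=; apply: eq_bigr => i _; rewrite expnS.
Qed.

Lemma logn_sum_expn (q Y N : nat) : prime q -> odd q -> Y = 1 %[mod q] -> 0 < N ->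
  logn q (\sum_(i < N) Y ^ i) = logn q N.
Proof.
move=> pq oq; elim/ltn_ind: N Y => N IH Y Y1 N0.
have q0 := prime_gt0 pq.
have [/dvdnP[M NM] | qN] := boolP (q %| N).
  have M0 : 0 < M by move: N0; rewrite NM muln_gt0 => /andP[].
  have Yq1 : Y ^ q = 1 %[mod q] by rewrite -modnXm Y1 modnXm exp1n.
  have ltMN : M < N by rewrite NM ltn_Pmulr ?prime_gt1.
  rewrite NM mulnC sum_expn_mul lognM ?sum_expn_gt0 // logn_sum_expn_prime //.
  by rewrite IH // lognM // (logn_prime _ pq) eqxx.
rewrite [RHS]logn_coprime ?prime_coprime // logn_coprime // prime_coprime //.
by rewrite /dvdn sum_expn_mod // (eqn_mod_dvd 0) ?subn0.
Qed.

Local Open Scope ring_scope.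

Lemma pm1_order_dvd (R : nzRingType) (x : R) (d E : nat) :
  x ^+ d = 1 -> (x ^+ E == 1) || (x ^+ E == -1) ->
  (forall k, (0 < k < E)%N -> ~~ ((x ^+ k == 1) || (x ^+ k == -1))) ->
  odd (d %/ E) -> (E %| d)%N /\ x ^+ E = 1.
Proof.
move=> xd xE Emin oddq.
have E0 : (0 < E)%N by case: E oddq {xE Emin} => //; rewrite divn0.
have xE_odd : (x ^+ E) ^+ (d %/ E) = x ^+ E.
  by case/orP: xE => /eqP ->; rewrite ?expr1n // -signr_odd oddq.
have xdE : x ^+ E * x ^+ (d %% E) = 1.
  by rewrite -xd {2}(divn_eq d E) exprD mulnC exprM xE_odd.
have r0 : (d %% E)%N = 0%N.
  case: (posnP (d %% E)) => // r_gt0.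
  have := Emin (d %% E)%N; rewrite r_gt0 ltn_mod E0 => /(_ isT) /negP[].
  by case/orP: xE => /eqP xE; rewrite xE ?mul1r ?mulN1r in xdE;
    rewrite -xdE ?opprK eqxx ?orbT.
split; first by rewrite /dvdn r0.
by rewrite -xdE r0 mulr1.
Qed.

Section PrimeField.
Variable q : nat.
Hypothesis pq : prime q.

Lemma eqn_mod_Fp (a b : nat) : (a == b %[mod q])%N = (a%:R == b%:R :> 'F_q).
Proof. by rewrite -(val_Fp_nat pq a) -(val_Fp_nat pq b). Qed.

Lemma pm1_mod_Fp (X k : nat) :
  pm1_mod q X k = ((X%:R : 'F_q) ^+ k == 1) || ((X%:R : 'F_q) ^+ k == -1).
Proof.
rewrite /pm1_mod eqn_mod_Fp (dvdn_pcharf (pchar_Fp pq)) natrD !natrX.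
by rewrite addr_eq0.
Qed.

Lemma e_order_dvd (X E d : nat) : is_e_order q X E ->
  (X ^ d = 1 %[mod q])%N -> odd (d %/ E) -> (E %| d)%N /\ (X ^ E = 1 %[mod q])%N.
Proof.
move=> [_ [XE Emin]] /eqP Xd oddq.
have [//| | |EdvD xE] := @pm1_order_dvd _ (X%:R : 'F_q) d E _ _ _ oddq.
- by move: Xd; rewrite eqn_mod_Fp natrX => /eqP.
- by rewrite -pm1_mod_Fp.
- by move=> k /andP[k0 kE]; rewrite -pm1_mod_Fp Emin.
by split=> //; apply/eqP; rewrite eqn_mod_Fp natrX xE.
Qed.

End PrimeField.

Lemma polyBA (R : comNzRingType) (n E : nat) :
  polyB R n E * polyA R E = 'X^n * ('X^E - 1).
Proof.
rewrite /polyB /polyA; case: eqP => [->|_]; first by rewrite expr1 mulrC.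
by rewrite subrX1 mulrA.
Qed.

Lemma polyBIA (R : comNzRingType) (n E N : nat) :
  polyB R n E * polyI R E N * polyA R E = 'X^(n + E * N) - 'X^n.
Proof.
rewrite mulrAC polyBA -mulrA /polyI.
under eq_bigr do rewrite exprM.
by rewrite -subrX1 -exprM mulrBr mulr1 -exprD.
Qed.

Local Close Scope ring_scope.

Definition natA (E X : nat) : nat := if E == 1 then X.-1 else \sum_(i < E) X ^ i.

Lemma horner_polyA (R : nzRingType) (E X : nat) : 0 < X ->
  ((polyA R E).[X%:R] = (natA E X)%:R)%R.
Proof.
move=> X0; rewrite /polyA /natA; case: eqP => _.
  by rewrite hornerD hornerN hornerX hornerC -subn1 natrB.
rewrite horner_sum natr_sum; apply: eq_bigr => i _.
by rewrite hornerXn natrX.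
Qed.

Lemma natA_gt0 (E X : nat) : 1 < X -> 0 < E -> 0 < natA E X.
Proof.
rewrite /natA => X1 E0; case: eqP => _; first by rewrite -subn1 subn_gt0.
exact: sum_expn_gt0.
Qed.

Lemma natA_dvd (E X : nat) : natA E X %| (X ^ E).-1.
Proof.
by rewrite /natA; case: eqP => [->|_]; rewrite ?expn1 // predn_exp dvdn_mull.
Qed.

Lemma natA_lt (E X : nat) : 1 < X -> 1 < E -> natA E X < 2 * X ^ (E - 1).
Proof.
move=> X1 E1; rewrite ltnNge; apply/negP => hA.
have := predn_exp X E; rewrite /natA (gtn_eqF E1) in hA *.
rewrite -{1}(subnK (ltnW E1)) addn1 expnS.
move: hA; set S := \sum_(_ < _) _; set Z := X ^ (E - 1) => hA.
have : 0 < Z by rewrite expn_gt0 ltnW.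
nia.
Qed.

Lemma expn_lt_of_dvdn_natA (q X E a : nat) : 1 < X -> 1 < E ->
  q ^ a %| natA E X -> natA E X != q ^ a -> q ^ a < X ^ (E - 1).
Proof.
move=> X_gt1 E_gt1 /dvdnP[k Ak] A_neq; rewrite -(ltn_pmul2l (isT : 0 < 2)).
apply: leq_ltn_trans (natA_lt X_gt1 E_gt1).
have : 0 < natA E X by rewrite natA_gt0 // ltnW.
move: A_neq; rewrite Ak; case: k {Ak} => [|[|k]] //; first by rewrite mul1n eqxx.
by rewrite leq_mul2r orbT.
Qed.

Lemma natA_le_predn (E X d : nat) : 1 < X -> 0 < E -> E %| d -> 0 < d ->
  natA E X <= (X ^ d).-1.
Proof.
move=> X_gt1 E_gt0 EdvD d_gt0.
apply: dvdn_leq; first by rewrite -subn1 subn_gt0 -{1}(expn0 X) ltn_exp2l.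
apply: dvdn_trans (natA_dvd E X) _.
by rewrite -(divnK EdvD) mulnC expnM [in X in _ %| X]predn_exp dvdn_mulr.
Qed.

Lemma mul_predn_exp_sub (q X m n y1 y2 : nat) : n <= m ->
  X ^ m + q ^ y2 = q ^ y1 + X ^ n -> X ^ n * (X ^ (m - n)).-1 = q ^ y1 - q ^ y2.
Proof. by move=> nm Heqn; rewrite -subn1 mulnBr muln1 -expnD subnKC //; lia. Qed.

Section Equation.
Variables (q X m n y1 y2 E : nat).
Hypotheses (pq : prime q) (oq : odd q) (X_gt1 : 1 < X) (cXq : coprime X q) (nm : n < m).
Hypotheses (y2_gt0 : 0 < y2) (y21 : y2 <= y1).
Hypothesis Heqn : X ^ m + q ^ y2 = q ^ y1 + X ^ n.
Hypotheses (XE : is_e_order q X E) (oddN : odd ((m - n) %/ E)).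

Lemma dvdn_predn_exp_sub : q ^ y2 %| (X ^ (m - n)).-1.
Proof.
have cqX : coprime (q ^ y2) (X ^ n) by rewrite coprimeXl // coprimeXr // coprime_sym.
rewrite -(Gauss_dvdr _ cqX) (mul_predn_exp_sub (ltnW nm) Heqn).
by apply: dvdn_sub; [exact: dvdn_exp2l | exact: dvdnn].
Qed.

Lemma e_order_dvdn_sub : E %| m - n /\ X ^ E = 1 %[mod q].
Proof.
apply: e_order_dvd => //; apply/eqP; rewrite eqn_mod_dvd ?expn_gt0 ?(ltnW X_gt1) // subn1.
by apply: dvdn_trans dvdn_predn_exp_sub; rewrite -{1}(expn1 q) dvdn_exp2l.
Qed.

Lemma dvdn_natA : q ^ (y2 - logn q ((m - n) %/ E)) %| natA E X.
Proof.
have [E0 [_ Emin]] := XE; have [EdvD XE1] := e_order_dvdn_sub.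
set N := (m - n) %/ E.
have N0 : 0 < N by rewrite divn_gt0 // dvdn_leq // subn_gt0.
have XE_pos : 0 < (X ^ E).-1 by rewrite -subn1 subn_gt0 -{1}(expn0 X) ltn_exp2l.
have qXE : q ^ (y2 - logn q N) %| (X ^ E).-1.
  rewrite pfactor_dvdn // leq_subLR -(logn_sum_expn pq oq XE1 N0) addnC.
  rewrite -lognM ?sum_expn_gt0 // -predn_exp -expnM mulnC divnK //.
  rewrite -pfactor_dvdn ?dvdn_predn_exp_sub //.
  by rewrite -subn1 subn_gt0 -{1}(expn0 X) ltn_exp2l // subn_gt0.
rewrite /natA; case: eqP => [E1 | /eqP E_neq1]; first by rewrite E1 expn1 in qXE.
(* For E > 1, minimality of E forbids X = 1 mod q. *)
rewrite predn_exp Gauss_dvdr // in qXE.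
rewrite coprimeXl // prime_coprime // -subn1 -eqn_mod_dvd ?(ltnW X_gt1) //.
have E1 : 1 < E by rewrite ltn_neqAle eq_sym E_neq1.
by have := Emin 1 isT E1; rewrite /pm1_mod expn1 negb_or => /andP[].
Qed.

End Equation.

Lemma double_lt_of_expn_gt (q X m n y1 y2 a : nat) : 1 < q -> n <= m ->
  a <= y2 -> q ^ a <= (X ^ (m - n)).-1 -> X ^ m + q ^ y2 = q ^ y1 + X ^ n ->
  q ^ y1 < X ^ m -> 2 * a < y1.
Proof.
move=> q_gt1 nm ay2 qa Heqn qX.
have qy2 : q ^ y2 < X ^ n by rewrite -(ltn_add2l (q ^ y1)) -Heqn ltn_add2r.
have qa_pos : 0 < (X ^ (m - n)).-1 by apply: leq_trans qa; rewrite expn_gt0 ltnW.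
rewrite -(ltn_exp2l _ _ q_gt1) mul2n -addnn expnD.
apply: (leq_ltn_trans (leq_mul (leq_pexp2l (ltnW q_gt1) ay2) qa)).
apply: (leq_trans _ (leq_subr (q ^ y2) (q ^ y1))).
by rewrite -(mul_predn_exp_sub nm Heqn) ltn_pmul2r.
Qed.

Lemma double_le_of_predn (q X m y1 a : nat) : 1 < q -> 1 < m ->
  X ^ m <= q ^ y1 -> q ^ a <= X.-1 -> 2 * a <= y1.
Proof.
move=> q_gt1 m_gt1 Xm qa; have X_gt : q ^ a < X.
  by move: qa (expn_gt0 q a); rewrite -subn1 (ltnW q_gt1); lia.
rewrite -(leq_exp2l _ _ q_gt1) mulnC expnM.
apply: leq_trans Xm; apply: leq_trans (ltnW (_ : _ < X ^ 2)) _.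
  by rewrite ltn_exp2r.
by rewrite leq_pexp2l // (leq_ltn_trans _ X_gt).
Qed.

Lemma ceil_div_le_of_expn_lt (q X m y1 a E : nat) : 1 < q -> 1 < E -> 0 < m ->
  X ^ m <= q ^ y1 -> q ^ a < X ^ (E - 1) -> (m * a + (E - 2)) %/ (E - 1) <= y1.
Proof.
move=> q_gt1 E_gt1 m0 Xm qa.
have lt_am : a * m < y1 * (E - 1).
  rewrite -(ltn_exp2l _ _ q_gt1) !expnM.
  apply: (leq_trans (_ : _ < (X ^ (E - 1)) ^ m)); first by rewrite ltn_exp2r.
  by rewrite -expnM mulnC expnM leq_exp2r // subn_gt0.
by rewrite -ltnS ltn_divLR ?subn_gt0 //; nia.
Qed.

Lemma expn_natE (a b : nat) : a ^ b = Nat.pow a b.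
Proof. by elim: b => // b IH; rewrite expnS IH. Qed.

Open Scope R_scope.

(* k is the numerator of (II); with delta = 0, (II) says exactly 2 ^ m <= q ^ k. *)
Lemma condII_expn (X q m y1 y2 e E : nat) : (1 < q)%N -> (0 < m)%N ->
  (X ^ m <= q ^ y1)%N -> condII X q m y1 y2 e E ->
  exists k : nat, (2 ^ m <= q ^ k)%N /\
    Z.of_nat k = Z.sub (Z.add (Z.mul (Z.of_nat (y2 - e))
                   (Z.add (Z.sub (Z.of_nat m) (Z.mul 2 (Z.of_nat E))) 2)) (Z.of_nat E)) 1.
Proof.
move=> q_gt1 m_gt0 Xm; have delta0 : (q ^ y1 < X ^ m)%N = false by rewrite ltnNge Xm.
rewrite /condII delta0 mul0n addn0.
set num := Z.sub _ 1 => H.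
have m_pos : 0 < INR m by apply: lt_0_INR; exact/ssrnat.ltP.
have q_gt1R : 1 < INR q by apply: lt_1_INR; exact/ssrnat.ltP.
have lnq_pos : 0 < ln (INR q) by rewrite -ln_1; apply: ln_increasing; lra.
have ln2_pos : 0 < ln (INR 2) by rewrite -ln_1; apply: ln_increasing; simpl; lra.
have ln2_le : ln (INR 2) * INR m <= IZR num * ln (INR q).
  have e1 : ln (INR 2) / ln (INR q) * ln (INR q) = ln (INR 2).
    by rewrite -Rmult_div_swap Rmult_div_l //; lra.
  have e2 : IZR num / INR m * INR m = IZR num by rewrite -Rmult_div_swap Rmult_div_l //; lra.
  have le_ratio := Rge_le _ _ H; have ML_pos := Rmult_lt_0_compat _ _ m_pos lnq_pos.
  rewrite -e1 -e2; nra.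
have num_pos : Z.lt 0 num by apply: lt_IZR; nra.
exists (Z.to_nat num); split; last by rewrite Z2Nat.id //; lia.
rewrite !expn_natE; apply/ssrnat.leP; apply: INR_le; rewrite !pow_INR.
apply: Rnot_lt_le => hlt.
have := ln_increasing _ _ (pow_lt (INR q) (Z.to_nat num) ltac:(lra)) hlt.
by rewrite !ln_pow ?[INR (Z.to_nat _)]INR_IZR_INZ ?Z2Nat.id; [lra | lia | simpl; lra | lra].
Qed.

Close Scope R_scope.

Lemma double_le_of_condII (X q m y1 y2 e E : nat) : 1 < q -> 1 < E -> 0 < m ->
  e < y2 -> q ^ (y2 - e) < 2 * X ^ (E - 1) -> X ^ m <= q ^ y1 ->
  condII X q m y1 y2 e E -> 2 * (y2 - e) <= y1.
Proof.
move=> q_gt1 E_gt1 m_gt0 ey2 qa Xm /(condII_expn q_gt1 m_gt0 Xm) [k [two_k numE]].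
set a := y2 - e in qa numE *.
have a_gt0 : 0 < a by rewrite subn_gt0.
have kE : k + (2 * a - 1) * (E - 1) = a * m by nia.
have lt_am : q ^ (a * m) < 2 ^ m * q ^ (y1 * (E - 1)).
  rewrite expnM; apply: (leq_trans (_ : _ < (2 * X ^ (E - 1)) ^ m)).
    by rewrite ltn_exp2r.
  by rewrite expnMn leq_mul2l -expnM mulnC !expnM leq_exp2r ?Xm ?orbT // subn_gt0.
rewrite leqNgt; apply/negP => y1_lt; move: lt_am; apply/negP; rewrite -leqNgt.
by rewrite -kE expnD leq_mul // leq_exp2l // leq_mul2r; apply/orP; right; lia.
Qed.

Local Open Scope ring_scope.

Lemma bezout_sqr (R : comNzRingType) (a b p r u w l : R) :
  a * p + b * r = 1 -> b * a = u - w ->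
  w * l * r + l * a = a ^+ 2 * (l * p) + u * (l * r).
Proof.
move=> bez ba; have -> : w = u - b * a by rewrite ba; ring.
by rewrite -[l * a]mulr1 -bez; ring.
Qed.

Lemma int_poly_horner (p : {poly rat}) (x : rat) :
  int_poly p -> x \is a Num.int -> p.[x] \is a Num.int.
Proof.
move=> p_int x_int; rewrite horner_coef; apply: rpred_sum => i _.
by have [z ->] := p_int i; rewrite rpredM ?rpredX ?intr_int.
Qed.

Lemma dvdn_sqr_add (q A a y1 c : nat) (zp zq : rat) :
  (q ^ a %| A)%N -> (c <= 2 * a)%N -> (c <= y1)%N ->
  zp \is a Num.int -> zq \is a Num.int ->
  exists z : int, A%:R ^+ 2 * zp + (q ^ y1)%:R * zq = z%:~R * (q ^ c)%:R.
Proof.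
move=> /dvdnP[k ->] c_le2a c_le /intrP[zp' ->] /intrP[zq' ->].
exists ((k ^ 2 * q ^ (2 * a - c))%N%:Z * zp' + (q ^ (y1 - c))%N%:Z * zq').
have qy1 : (q ^ y1)%:R = (q ^ (y1 - c))%:R * (q ^ c)%:R :> rat.
  by rewrite -natrM -expnD subnK.
have A2 : (k * q ^ a)%:R ^+ 2 = (k ^ 2 * q ^ (2 * a - c))%:R * (q ^ c)%:R :> rat.
  by rewrite -natrX -natrM expnMn -mulnA -expnD subnK // -expnM (mulnC a) mulnC.
by rewrite qy1 A2 intrD !intrM -!pmulrn; ring.
Qed.

Lemma horner_bezout_sqr (q X m n E N y1 y2 l : nat) (P Q : {poly rat}) : (0 < X)%N ->
  (n + E * N = m)%N -> (X ^ m + q ^ y2 = q ^ y1 + X ^ n)%N ->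
  polyA rat E * P + polyB rat n E * polyI rat E N * Q = 1 ->
  (q ^ y2 * l)%:R * Q.[X%:R] + l%:R * (polyA rat E).[X%:R] =
  (natA E X)%:R ^+ 2 * (l%:R *: P).[X%:R] + (q ^ y1)%:R * (l%:R *: Q).[X%:R].
Proof.
move=> X_gt0 <- /(congr1 (fun k => k%:R : rat)) Heqn bezout.
rewrite !hornerZ -horner_polyA // natrM.
apply: (bezout_sqr (b := (polyB rat n E * polyI rat E N).[X%:R])).
  by rewrite -!hornerM -hornerD bezout hornerC.
rewrite -!hornerM polyBIA hornerD hornerN !hornerXn -!natrX.
by apply/eqP; rewrite subr_eq addrAC -natrD -Heqn natrD addrK.
Qed.

Theorem mainTheorem4 (m n q X y1 y2 E : nat) (P Q : {poly rat}) (l : nat) :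
  (0 < n)%N -> (n < m)%N -> (3 <= m)%N ->
  prime q -> odd q ->
  (1 < X)%N -> coprime X q -> (0 < y2)%N -> (y2 < y1)%N ->
  (X%:Z ^+ m - X%:Z ^+ n = q%:Z ^+ y1 - q%:Z ^+ y2) ->
  is_e_order q X E ->
  let N := ((m - n) %/ E)%N in
  let e := logn q N in
  odd N -> (e < y2)%N ->
  ((1 < E)%N ->
     (polyA rat E).[X%:R] != (q ^ (y2 - e))%:R \/ condII X q m y1 y2 e E) ->
  (size Q < size (polyA rat E))%N ->
  polyA rat E * P + polyB rat n E * polyI rat E N * Q = 1 ->
  (0 < l)%N -> int_poly (l%:R *: P) -> int_poly (l%:R *: Q) ->
  (forall l' : nat, (0 < l')%N -> int_poly (l'%:R *: P) ->
      int_poly (l'%:R *: Q) -> (l <= l')%N) ->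
  let v : rat := (q ^ y2 * l)%:R * Q.[X%:R] + l%:R * (polyA rat E).[X%:R] in
  ((1 < E)%N -> (polyA rat E).[X%:R] != (q ^ (y2 - e))%:R ->
     exists z : int, v = z%:~R *
       (q ^ minn (2 * (y2 - e)) ((m * (y2 - e) + (E - 2)) %/ (E - 1)))%:R)
  /\
  (E = 1%N \/ ((1 < E)%N /\ condII X q m y1 y2 e E) ->
     exists z : int, v = z%:~R * (q ^ (2 * (y2 - e)))%:R).
Proof.
move=> n_gt0 nm m_ge3 pq oq X_gt1 cXq y2_gt0 y21 Heq XE N e oddN ey2 _ _ bezout
  _ lP_int lQ_int _ v.
have Heqn : (X ^ m + q ^ y2 = q ^ y1 + X ^ n)%N.
  by move: Heq; rewrite -!natz -!natrX !natz; lia.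
have [EdvD _] := e_order_dvdn_sub pq X_gt1 cXq nm y2_gt0 (ltnW y21) Heqn XE oddN.
have qA := dvdn_natA pq oq X_gt1 cXq nm y2_gt0 (ltnW y21) Heqn XE oddN.
have v_mulq c : (c <= 2 * (y2 - e))%N -> (c <= y1)%N ->
    exists z : int, v = z%:~R * (q ^ c)%:R.
  move=> c2 cy1; have X_int : (X%:R : rat) \is a Num.int by rewrite natr_int.
  have mE : (n + E * N)%N = m by rewrite mulnC divnK // subnKC // ltnW.
  rewrite /v (horner_bezout_sqr l (ltnW X_gt1) mE Heqn bezout).
  by apply: dvdn_sqr_add qA c2 cy1 _ _; exact: int_poly_horner.
have q_gt1 := prime_gt1 pq; have [E_gt0 _] := XE.
have qa_le : (q ^ (y2 - e) <= natA E X)%N by rewrite dvdn_leq ?natA_gt0.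
have [/ltnW y1_ge | y1_le] := ltnP (2 * (y2 - e)) y1.
  by split=> [_ _ | _]; apply: v_mulq; rewrite ?geq_minl // (leq_trans (geq_minl _ _)).
have Xm_le : (X ^ m <= q ^ y1)%N.
  have d_gt0 : (0 < m - n)%N by rewrite subn_gt0.
  have := leq_trans qa_le (natA_le_predn X_gt1 E_gt0 EdvD d_gt0).
  move/(double_lt_of_expn_gt q_gt1 (ltnW nm) (leq_subr e y2))/(_ Heqn) => lt_y1.
  by rewrite leqNgt; apply/negP => /lt_y1; rewrite ltnNge y1_le.
have m_gt0 : (0 < m)%N by apply: leq_trans m_ge3.
split=> [E_gt1 condI | [E1 | [E_gt1 condII]]]; apply: v_mulq; rewrite ?geq_minl //.
- apply: leq_trans (geq_minr _ _) (ceil_div_le_of_expn_lt q_gt1 E_gt1 m_gt0 Xm_le _).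
  apply: expn_lt_of_dvdn_natA => //.
  by move: condI; rewrite horner_polyA ?eqr_nat // ltnW.
- by apply: double_le_of_predn q_gt1 (leq_trans _ m_ge3) Xm_le _; rewrite /natA E1 in qa_le.
- exact: double_le_of_condII q_gt1 E_gt1 m_gt0 ey2
    (leq_ltn_trans qa_le (natA_lt X_gt1 E_gt1)) Xm_le condII.
Qed.
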